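(* For all $n,m$ and every distribution $\mathcal{D}$ supported on $[0,1]$, plurality is an $\alpha$-expected-welfare-maximizing rule for $\mathcal{D}$ with $\alpha=\max(\frac1m,\frac1n)$: for every preference profile $\sigma$, any alternative $p$ ranked first by the largest number of voters satisfies $\mathbb{E}[\mathrm{sw}(p,u)]\ge\max(\frac1m,\frac1n)\max_{j\in A}\mathbb{E}[\mathrm{sw}(j,u)]$.
   Context: There are $n$ voters and $m$ alternatives $A=\{1,\dots,m\}$. A preference profile $\sigma$ consists of a ranking of $A$ for each voter. Given $\mathcal{D}$ and $\sigma$, a random utility profile $u$ consistent with $\sigma$ is generated as follows: independently for each voter $i$, draw $m$ i.i.d. samples from $\mathcal{D}$ and assign them, from highest to lowest, to the alternatives in the order of voter $i$'s ranking. The social welfare of $j$ is $\mathrm{sw}(j,u)=\sum_i u_{ij}$; expectations are over $u$. *)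

From HB Require Import structures.
From mathcomp Require Import all_boot all_order all_algebra all_fingroup.
From mathcomp Require Import all_classical all_reals all_analysis.
Set Implicit Arguments. Unset Strict Implicit. Unset Printing Implicit Defensive.
Import Order.TTheory GRing.Theory Num.Theory.
Local Open Scope ring_scope.
Local Open Scope classical_set_scope.

Section Defs.
Variable R : realType.
Variable D : probability R R.

(* Expectation of [f] when the coordinates indexed by the (duplicate-free)
   list [s] of an assignment [I -> R] are drawn i.i.d. from [D]
   (iterated integrals = integral against the product measure D^|s|);
   coordinates not in [s] are set to 0. *)
Fixpoint iid_expect (I : eqType) (s : seq I) (f : (I -> R) -> R) : R :=
  match s with
  | [::] => f (fun _ => 0)
  | a :: s' => Rintegral D setT
      (fun x => iid_expect s' (fun g => f (fun b => if b == a then x else g b)))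
  end.

(* A preference profile: [sigma i j] is the position (0 = top) of alternative
   [j] in voter [i]'s ranking. *)
Definition profile (n m : nat) := 'I_n -> {perm 'I_m}.

(* Random utility profile consistent with [sigma], as a function of the
   n*m i.i.d. samples [x]: voter i's m samples are sorted from highest to
   lowest and assigned to the alternatives in the order of voter i's ranking. *)
Definition utility (n m : nat) (sigma : profile n m) (x : 'I_n * 'I_m -> R)
    (i : 'I_n) (j : 'I_m) : R :=
  nth 0 (sort (fun a b : R => b <= a) [seq x (i, k) | k <- enum 'I_m])
        (sigma i j).

Definition sw (n m : nat) (sigma : profile n m) (x : 'I_n * 'I_m -> R)
    (j : 'I_m) : R :=
  \sum_(i < n) utility sigma x i j.

Definition expected_sw (n m : nat) (sigma : profile n m) (j : 'I_m) : R :=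
  iid_expect (enum {: 'I_n * 'I_m}) (fun x => sw sigma x j).

End Defs.

Definition plurality_score (n m : nat) (sigma : 'I_n -> {perm 'I_m}) (j : 'I_m) : nat :=
  #|[set i : 'I_n | nat_of_ord (sigma i j) == 0%N]|.

Definition plurality_winner (n m : nat) (sigma : 'I_n -> {perm 'I_m}) (p : 'I_m) : Prop :=
  forall j : 'I_m, (plurality_score sigma j <= plurality_score sigma p)%N.

From HB Require Import structures.
From mathcomp Require Import all_boot all_order all_algebra all_fingroup.
From mathcomp Require Import all_classical all_reals all_analysis.
From mathcomp Require Import measurable_realfun lra.
Import Order.TTheory GRing.Theory Num.Theory.
Import numFieldNormedType.Exports.
Set Implicit Arguments. Unset Strict Implicit. Unset Printing Implicit Defensive.
Local Open Scope ring_scope.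
Local Open Scope classical_set_scope.

(* Write c_k for the expected k-th largest of m i.i.d. draws from D.  Each
   utility u_ij is such an order statistic, so E[sw(j)] = sum_i c_(sigma_i(j)),
   and as D lives on [0,1] we have 0 <= c_k <= c_0.  Hence E[sw(j)] <= n c_0
   while E[sw(p)] >= s c_0, where s is the plurality score of p; the m scores
   sum to n, so s >= n/m, and s >= 1 as soon as n > 0.
   Expectations are iterated integrals, so linearity and monotonicity are proved
   by induction on the number of coordinates, for functions Lipschitz in the l1
   distance: integrating out one coordinate keeps them Lipschitz in the others,
   which makes every partial integral integrable on [0,1]. *)

Section LipschitzIntegral.
Variables (R : realType) (D : probability R R).
Hypothesis D01 : D `[0%R, 1%R] = 1%E.

Lemma lipschitzP (k : R) (h : R -> R) :
  k.-lipschitz h <-> forall x y, `|h x - h y| <= k * `|x - y|.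
Proof. by split=> [hl x y | hl [x y] _]; [exact: (hl (x, y)) | exact: hl]. Qed.

Lemma lipschitz_ge0 (k : R) (h : R -> R) : k.-lipschitz h -> 0 <= k.
Proof.
by move=> /lipschitzP /(_ 1 0); rewrite subr0 normr1 mulr1; apply: le_trans.
Qed.

Lemma lipschitz_continuous (k : R) (h : R -> R) : k.-lipschitz h -> continuous h.
Proof.
move=> hl x; have k1 : 0 < k + 1 by rewrite ltr_wpDl ?(lipschitz_ge0 hl).
move/lipschitzP in hl.
apply/cvgrPdist_lt => e e0; near=> y.
apply: (le_lt_trans (hl x y)); apply: (@le_lt_trans _ _ ((k + 1) * `|x - y|)).
  by rewrite ler_wpM2r // lerDl.
rewrite -ltr_pdivlMl //; near: y.
by apply/nbhs_normP; exists ((k + 1)^-1 * e) => //=; rewrite mulr_gt0 ?invr_gt0.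
Unshelve. all: by end_near. Qed.

Lemma lipschitz_measurable (k : R) (h : R -> R) :
  k.-lipschitz h -> measurable_fun setT h.
Proof. by move=> /lipschitz_continuous; apply: continuous_measurable_fun. Qed.

Lemma lipschitz_integrable_itv01 (k : R) (h : R -> R) :
  k.-lipschitz h -> D.-integrable `[0%R, 1%R] (EFin \o h).
Proof.
move=> hl; apply: measurable_bounded_integrable => //.
- by rewrite (le_lt_trans (probability_le1 _ _)) ?ltry.
- exact: measurable_funTS (lipschitz_measurable hl).
exists (`|h 0| + k); split; first by rewrite num_real.
move=> M hM x /=; rewrite in_itv /= => /andP[x0 x1]; apply: le_trans (ltW hM).
rewrite -[h x](subrK (h 0)) (le_trans (ler_normD _ _)) // addrC lerD2l.
have k0 := lipschitz_ge0 hl; move/lipschitzP: hl => /(_ x 0); rewrite subr0.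
by move=> /le_trans; apply; rewrite ger0_norm // ler_piMr.
Qed.

Lemma Rintegral_setT_itv01 (h : R -> R) : measurable_fun setT h ->
  Rintegral D setT h = Rintegral D `[0%R, 1%R] h.
Proof.
move=> mh; rewrite /Rintegral; congr fine.
have mI : measurable (`[0%R, 1%R] : set R) by [].
have mC : measurable (~` `[0%R, 1%R] : set R) by exact: measurableC.
have DC0 : D (~` `[0%R, 1%R]) = 0%E.
  by rewrite (probability_setC D mI) D01 subee.
rewrite -(setUv `[0%R, 1%R]) integral_setU //; last 2 first.
- by rewrite setUv; apply/measurable_EFinP.
- exact/disj_setPCl.
rewrite [X in (_ + X)%E]null_set_integral ?adde0 //.
by apply: measurable_funTS; apply/measurable_EFinP.
Qed.

Lemma Rintegral_cst_probability (c : R) : Rintegral D setT (fun=> c) = c.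
Proof. by rewrite Rintegral_cst // [fine _](congr1 fine (probability_setT D)) mulr1. Qed.

Lemma Rintegral_lipschitzD (k1 k2 : R) (h1 h2 : R -> R) :
  k1.-lipschitz h1 -> k2.-lipschitz h2 ->
  Rintegral D setT (h1 \+ h2) = Rintegral D setT h1 + Rintegral D setT h2.
Proof.
move=> l1 l2; have [m1 m2] := (lipschitz_measurable l1, lipschitz_measurable l2).
rewrite !Rintegral_setT_itv01 ?RintegralD //; last exact: measurable_funD.
- exact: lipschitz_integrable_itv01 l1.
- exact: lipschitz_integrable_itv01 l2.
Qed.

Lemma le_Rintegral_lipschitz (k1 k2 : R) (h1 h2 : R -> R) :
  k1.-lipschitz h1 -> k2.-lipschitz h2 ->
  (forall x, 0 <= x <= 1 -> h1 x <= h2 x) ->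
  Rintegral D setT h1 <= Rintegral D setT h2.
Proof.
move=> l1 l2 h12.
rewrite (Rintegral_setT_itv01 (lipschitz_measurable l1)).
rewrite (Rintegral_setT_itv01 (lipschitz_measurable l2)).
by apply: le_Rintegral (lipschitz_integrable_itv01 l1) (lipschitz_integrable_itv01 l2) _.
Qed.

End LipschitzIntegral.

Section IidExpectation.
Variables (R : realType) (D : probability R R).
Hypothesis D01 : D `[0%R, 1%R] = 1%E.
Variable I : eqType.
Implicit Types (a : I) (s : seq I) (f : (I -> R) -> R) (g : I -> R).

Definition upd a (x : R) g : I -> R := fun b => if b == a then x else g b.

Lemma iid_expect_cons a s f : iid_expect D (a :: s) f =
  Rintegral D setT (fun x => iid_expect D s (fun g => f (upd a x g))).
Proof. by []. Qed.

Lemma iid_expect_cst s (c : R) : iid_expect D s (fun=> c) = c.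
Proof.
elim: s => [//|a s IHs]; rewrite iid_expect_cons.
under eq_fun do rewrite IHs; exact: Rintegral_cst_probability.
Qed.

Definition l1_lipschitz s f := exists2 L : R, 0 <= L &
  forall g g', `|f g - f g'| <= L * \sum_(b <- s) `|g b - g' b|.

Lemma l1_lipschitz_cst s (c : R) : l1_lipschitz s (fun=> c).
Proof. by exists 0 => // g g'; rewrite subrr normr0 mul0r. Qed.

Lemma l1_lipschitzD s f1 f2 :
  l1_lipschitz s f1 -> l1_lipschitz s f2 -> l1_lipschitz s (f1 \+ f2).
Proof.
move=> [L1 L10 H1] [L2 L20 H2]; exists (L1 + L2) => [|g g']; first exact: addr_ge0.
by rewrite opprD addrACA mulrDl (le_trans (ler_normD _ _)) // lerD.
Qed.

Lemma l1_lipschitz_sum (T : Type) (r : seq T) s (F : T -> (I -> R) -> R) :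
  (forall t, l1_lipschitz s (F t)) -> l1_lipschitz s (fun g => \sum_(t <- r) F t g).
Proof.
move=> hF; elim: r => [|t r IHr].
  by under eq_fun do rewrite big_nil; exact: l1_lipschitz_cst.
by under eq_fun do rewrite big_cons; exact: l1_lipschitzD.
Qed.

Lemma l1_lipschitz_upd a s f x :
  l1_lipschitz (a :: s) f -> l1_lipschitz s (fun g => f (upd a x g)).
Proof.
move=> [L L0 hf]; exists L => // g g'; apply: (le_trans (hf _ _)).
rewrite ler_wpM2l // big_cons /upd eqxx subrr normr0 add0r.
by apply: ler_sum => b _; case: (b == a); rewrite ?subrr ?normr0.
Qed.

Lemma l1_dist_upd a s x y g :
  \sum_(b <- a :: s) `|upd a x g b - upd a y g b| <= `|x - y| *+ (size s).+1.
Proof.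
rewrite -[(size s).+1]/(size (a :: s)) -count_predT.
rewrite -[_ *+ _]addr0 -iter_addr -big_const_seq.
by apply: ler_sum => b _; rewrite /upd; case: (b == a); rewrite ?subrr ?normr0.
Qed.

Definition in_unit_cube s g := forall b, b \in s -> 0 <= g b <= 1.

Definition iid_additive s := forall f1 f2,
  l1_lipschitz s f1 -> l1_lipschitz s f2 ->
  iid_expect D s (f1 \+ f2) = iid_expect D s f1 + iid_expect D s f2.

Definition iid_monotone s := forall f1 f2,
  l1_lipschitz s f1 -> l1_lipschitz s f2 ->
  (forall g, in_unit_cube s g -> f1 g <= f2 g) ->
  iid_expect D s f1 <= iid_expect D s f2.

Lemma iid_expect_le_addr s f1 f2 (c : R) :
  iid_additive s -> iid_monotone s -> l1_lipschitz s f1 -> l1_lipschitz s f2 ->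
  (forall g, in_unit_cube s g -> f1 g <= f2 g + c) ->
  iid_expect D s f1 <= iid_expect D s f2 + c.
Proof.
move=> addE monoE l1 l2 h12.
rewrite -[X in _ + X](iid_expect_cst s) -addE //; last exact: l1_lipschitz_cst.
by apply: monoE => //; apply: l1_lipschitzD => //; exact: l1_lipschitz_cst.
Qed.

Lemma lipschitz_iid_section a s f :
  iid_additive s -> iid_monotone s -> l1_lipschitz (a :: s) f ->
  exists k, k.-lipschitz (fun x => iid_expect D s (fun g => f (upd a x g))).
Proof.
move=> addE monoE hf; have [L L0 Lf] := hf.
exists (L *+ (size s).+1); apply/lipschitzP.
suff one_side x y : iid_expect D s (fun g => f (upd a x g)) <=
    iid_expect D s (fun g => f (upd a y g)) + L *+ (size s).+1 * `|x - y|.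
  move=> x y; have := one_side x y; have := one_side y x; rewrite (distrC y x).
  set A := iid_expect _ _ _; set B := iid_expect _ _ _; set C := _ * _.
  by rewrite ler_norml => ? ?; apply/andP; split; lra.
apply: (iid_expect_le_addr addE monoE) => [||g _].
- exact: l1_lipschitz_upd.
- exact: l1_lipschitz_upd.
rewrite -lerBlDl (le_trans (ler_norm _)) // (le_trans (Lf _ _)) //.
by rewrite mulrnAl -mulrnAr ler_wpM2l // l1_dist_upd.
Qed.

Lemma iid_additive_monotone s : iid_additive s /\ iid_monotone s.
Proof.
elim: s => [|a s [addE monoE]].
  by split=> // f1 f2 _ _; apply=> b; rewrite in_nil.
split=> f1 f2 l1 l2 => [|le12]; rewrite !iid_expect_cons;
  have [k1 hk1] := lipschitz_iid_section addE monoE l1;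
  have [k2 hk2] := lipschitz_iid_section addE monoE l2.
  rewrite -(Rintegral_lipschitzD D01 hk1 hk2); congr Rintegral; apply: funext => x.
  exact: addE (l1_lipschitz_upd x l1) (l1_lipschitz_upd x l2).
apply: (le_Rintegral_lipschitz D01 hk1 hk2) => x x01.
apply: monoE (l1_lipschitz_upd x l1) (l1_lipschitz_upd x l2) _ => g g01.
by apply: le12 => b; rewrite in_cons /upd; case: (b == a) => //= /g01.
Qed.

Lemma iid_expectD s f1 f2 : l1_lipschitz s f1 -> l1_lipschitz s f2 ->
  iid_expect D s (f1 \+ f2) = iid_expect D s f1 + iid_expect D s f2.
Proof. exact: (iid_additive_monotone s).1. Qed.

Lemma ler_iid_expect s f1 f2 : l1_lipschitz s f1 -> l1_lipschitz s f2 ->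
  (forall g, in_unit_cube s g -> f1 g <= f2 g) ->
  iid_expect D s f1 <= iid_expect D s f2.
Proof. exact: (iid_additive_monotone s).2. Qed.

Lemma iid_expect_sum (T : Type) (r : seq T) s (F : T -> (I -> R) -> R) :
  (forall t, l1_lipschitz s (F t)) ->
  iid_expect D s (fun g => \sum_(t <- r) F t g) = \sum_(t <- r) iid_expect D s (F t).
Proof.
move=> hF; elim: r => [|t r IHr].
  by under eq_fun do rewrite big_nil; rewrite big_nil iid_expect_cst.
under eq_fun do rewrite big_cons.
by rewrite big_cons -IHr -iid_expectD //; exact: l1_lipschitz_sum.
Qed.

Definition ignores a f := forall g x, f (upd a x g) = f g.

Lemma ignores_upd a b x f : ignores b f -> ignores b (fun g => f (upd a x g)).
Proof.
move=> hf g y; have [->|ba] := eqVneq b a.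
  by congr f; apply: funext => c; rewrite /upd; case: (c == a).
rewrite -[in RHS](hf _ y); congr f; apply: funext => c; rewrite /upd.
by have [->|//] := eqVneq c a; rewrite eq_sym (negbTE ba).
Qed.

Lemma iid_expect_filter (P : pred I) s f :
  (forall a, ~~ P a -> ignores a f) ->
  iid_expect D s f = iid_expect D [seq b <- s | P b] f.
Proof.
elim: s f => [//|a s IHs] f hf /=; case: ifP => Pa.
  congr Rintegral; apply: funext => x; apply: IHs => b /hf; exact: ignores_upd.
have -> : (fun x => iid_expect D s (fun g => f (upd a x g))) = fun=> iid_expect D s f.
  by apply: funext => x; congr iid_expect; apply: funext => g; apply: hf; rewrite Pa.
by rewrite Rintegral_cst_probability; exact: IHs.
Qed.

End IidExpectation.

Lemma iid_expect_map (R : realType) (D : probability R R) (I J : eqType)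
    (phi : J -> I) (t : seq J) (f1 : (I -> R) -> R) (f2 : (J -> R) -> R) :
  injective phi -> (forall g, f1 g = f2 (g \o phi)) ->
  iid_expect D (map phi t) f1 = iid_expect D t f2.
Proof.
move=> phi_inj; elim: t f1 f2 => [|b t IHt] f1 f2 hf /=; first exact: hf.
congr Rintegral; apply: funext => x; apply: IHt => g; rewrite hf.
by congr f2; apply: funext => c; rewrite /upd /= (inj_eq phi_inj).
Qed.

Section OrderStatistics.
Variable R : realType.
Local Notation ger := (fun a b : R => b <= a).
Implicit Types (s : seq R) (t c : R).

Lemma ger_total : total ger.
Proof. by move=> x y; rewrite le_total. Qed.

Lemma sorted_ger_nth s i j : sorted ger s -> (i <= j)%N -> (j < size s)%N ->
  nth 0 s j <= nth 0 s i.
Proof.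
move=> ss ij js; apply: (sorted_leq_nth _ _ 0 ss) => //.
- by move=> y x z /= yx zy; exact: le_trans zy yx.
- exact: leq_ltn_trans js.
Qed.

Lemma sorted_ger_lt_nth s k t : sorted ger s -> (k < size s)%N ->
  (t < nth 0 s k) = (k < count (fun v => (t < v)%R) s)%N.
Proof.
move=> ss ks; apply/idP/idP => [t_lt|].
  rewrite -(cat_take_drop k.+1 s) count_cat.
  have sz : size (take k.+1 s) = k.+1 by rewrite size_takel.
  suff -> : count (fun v => (t < v)%R) (take k.+1 s) = k.+1 by rewrite ltn_addr.
  apply/eqP; rewrite -[X in _ == X]sz -all_count; apply/(all_nthP 0) => l.
  by rewrite sz => lk; rewrite nth_take // (lt_le_trans t_lt) // sorted_ger_nth.
apply: contraLR; rewrite -leNgt -leqNgt => nth_le.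
rewrite -(cat_take_drop k s) count_cat.
have -> : count (fun v => t < v) (drop k s) = 0%N.
  apply/eqP; rewrite -leqn0 leqNgt -has_count; apply/(has_nthP 0) => -[l].
  rewrite size_drop nth_drop => lk; apply/negP; rewrite -leNgt (le_trans _ nth_le) //.
  by rewrite sorted_ger_nth ?leq_addr // -ltn_subRL.
by rewrite addn0 (leq_trans (count_size _ _)) // size_take ks.
Qed.

Lemma sort_ger_sorted s : sorted ger (sort ger s).
Proof. exact: sort_sorted ger_total s. Qed.

Lemma nth_sort_ger_le_shift (T : Type) (E : seq T) (h h' : T -> R) c k :
  (k < size E)%N -> (forall l, h l <= h' l + c) ->
  nth 0 (sort ger (map h E)) k <= nth 0 (sort ger (map h' E)) k + c.
Proof.
move=> kE hh'; set s := sort ger (map h E); set s' := sort ger (map h' E).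
have [ss ss'] : sorted ger s /\ sorted ger s' by split; exact: sort_ger_sorted.
have [ks ks'] : (k < size s)%N /\ (k < size s')%N by rewrite !size_sort !size_map.
rewrite leNgt; apply/negP; rewrite sorted_ger_lt_nth // count_sort count_map => k_lt.
suff : (k < count (fun v => (nth 0 s' k < v)%R) s')%N by rewrite -sorted_ger_lt_nth ?ltxx.
rewrite count_sort count_map (leq_trans k_lt) // sub_count // => l /=.
by move=> /lt_le_trans/(_ (hh' l)); rewrite ltrD2r.
Qed.

Lemma nth_sort_ger_ge0 (T : eqType) (E : seq T) (h : T -> R) k :
  (k < size E)%N -> (forall l, 0 <= h l) -> 0 <= nth 0 (sort ger (map h E)) k.
Proof.
move=> kE h0; have : nth 0 (sort ger (map h E)) k \in map h E.
  by rewrite -(mem_sort ger) mem_nth // size_sort size_map.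
by case/mapP=> l _ ->.
Qed.

Definition order_stat (m k : nat) (h : 'I_m -> R) : R :=
  nth 0 (sort ger [seq h l | l <- enum 'I_m]) k.

Lemma order_stat_le_shift m k (h h' : 'I_m -> R) c : (k < m)%N ->
  (forall l, h l <= h' l + c) -> order_stat k h <= order_stat k h' + c.
Proof. by move=> km; apply: nth_sort_ger_le_shift; rewrite size_enum_ord. Qed.

Lemma order_stat_ge0 m k (h : 'I_m -> R) : (k < m)%N ->
  (forall l, 0 <= h l) -> 0 <= order_stat k h.
Proof. by move=> km; apply: nth_sort_ger_ge0; rewrite size_enum_ord. Qed.

Lemma order_stat_le_max m k (h : 'I_m -> R) : (k < m)%N ->
  order_stat k h <= order_stat 0 h.
Proof.
move=> km; apply: sorted_ger_nth (sort_ger_sorted _) (leq0n k) _.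
by rewrite size_sort size_map size_enum_ord.
Qed.

Lemma l1_lipschitz_order_stat (I : eqType) (s : seq I) m (phi : 'I_m -> I) k :
  (forall l, phi l \in s) -> (k < m)%N ->
  l1_lipschitz s (fun g => order_stat k (g \o phi)).
Proof.
move=> phis km; exists 1 => // g g'; rewrite mul1r.
set d := \sum_(b <- s) _.
have dist l : `|g (phi l) - g' (phi l)| <= d.
  by rewrite /d (big_rem (phi l)) //= lerDl sumr_ge0.
have le_gg' : order_stat k (g \o phi) <= order_stat k (g' \o phi) + d.
  apply: order_stat_le_shift => // l; have := dist l.
  by rewrite ler_norml => /andP[? ?] /=; lra.
have le_g'g : order_stat k (g' \o phi) <= order_stat k (g \o phi) + d.
  apply: order_stat_le_shift => // l; have := dist l.
  by rewrite ler_norml => /andP[? ?] /=; lra.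
by rewrite ler_norml; apply/andP; split; lra.
Qed.

End OrderStatistics.

(* [plurality_score] counts a classical set, whose membership is [`[< _ >]]. *)
Lemma in_set_predE (T : Type) (b : pred T) x : (x \in [set y | b y]) = b x.
Proof. by rewrite /in_mem /= /in_set asboolb. Qed.

Lemma filter_fst_allpairs (T1 T2 : eqType) (s : seq T1) (t : seq T2) (i : T1) :
  [seq b <- [seq (x, y) | x <- s, y <- t] | b.1 == i] =
  [seq (x, y) | x <- [seq x <- s | x == i], y <- t].
Proof.
elim: s => //= x s IHs; rewrite filter_cat IHs filter_map.
have [->|xi] /= := eqVneq x i.
  by rewrite (@eq_filter _ _ predT) ?filter_predT // => y /=; rewrite eqxx.
by rewrite (@eq_filter _ _ pred0) ?filter_pred0 // => y /=; exact/negbTE.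
Qed.

Lemma filter_fst_enum_prod (T1 T2 : finType) (i : T1) :
  [seq b <- enum {: T1 * T2} | b.1 == i] = [seq (i, y) | y <- enum T2].
Proof.
have -> : enum {: T1 * T2} = prod_enum T1 T2 by rewrite enumT unlock.
rewrite filter_fst_allpairs (filter_pred1_uniq (enum_uniq _)) ?mem_enum //=.
by rewrite cats0.
Qed.

Section ExpectedWelfare.
Variables (R : realType) (D : probability R R).
Hypothesis D01 : D `[0%R, 1%R] = 1%E.
Variables (n m : nat) (sigma : profile n m).

Definition expected_order_stat k := iid_expect D (enum 'I_m) (@order_stat R m k).

Lemma l1_lipschitz_order_stat_enum k : (k < m)%N ->
  l1_lipschitz (enum 'I_m) (@order_stat R m k).
Proof. by apply: (@l1_lipschitz_order_stat R _ _ _ id) => l; rewrite mem_enum. Qed.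

Lemma expected_order_stat_le_max k : (k < m)%N ->
  expected_order_stat k <= expected_order_stat 0.
Proof.
move=> km; apply: (ler_iid_expect D01) => [||g _]; last exact: order_stat_le_max.
- exact: l1_lipschitz_order_stat_enum.
- exact: l1_lipschitz_order_stat_enum (leq_ltn_trans (leq0n k) km).
Qed.

Lemma expected_order_stat_ge0 k : (k < m)%N -> 0 <= expected_order_stat k.
Proof.
move=> km; rewrite -(iid_expect_cst D (enum 'I_m) 0).
apply: (ler_iid_expect D01) => [||g g01].
- exact: l1_lipschitz_cst.
- exact: l1_lipschitz_order_stat_enum.
- by apply: order_stat_ge0 => // l; have /andP[] := g01 l (mem_enum _ l).
Qed.

Lemma expected_utility i j :
  iid_expect D (enum {: 'I_n * 'I_m}) (fun x => utility sigma x i j)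
  = expected_order_stat (sigma i j).
Proof.
rewrite (iid_expect_filter _ (P := fun b => b.1 == i)) ?filter_fst_enum_prod.
  by apply: iid_expect_map => // y1 y2 [].
move=> b bi g x; rewrite /utility; congr (nth _ (sort _ _) _); apply: eq_map => l.
by rewrite /upd; case: eqP => // bil; rewrite -bil eqxx in bi.
Qed.

Lemma expected_swE j :
  expected_sw D sigma j = \sum_(i < n) expected_order_stat (sigma i j).
Proof.
rewrite /expected_sw /sw (iid_expect_sum D01) => [|i].
  by apply: eq_bigr => i _; exact: expected_utility.
by apply: (@l1_lipschitz_order_stat R _ _ _ (pair i)) => // l; rewrite mem_enum.
Qed.

Lemma expected_sw_le_top j : expected_sw D sigma j <= n%:R * expected_order_stat 0.
Proof.
rewrite expected_swE mulr_natl -[n in _ *+ n]card_ord -sumr_const.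
by apply: ler_sum => i _; exact: expected_order_stat_le_max.
Qed.

Lemma expected_sw_ge_score p :
  (plurality_score sigma p)%:R * expected_order_stat 0 <= expected_sw D sigma p.
Proof.
rewrite expected_swE /plurality_score -sum1_card natr_sum mulr_suml big_mkcond /=.
apply: ler_sum => i _; rewrite in_set_predE; case: eqP => [->|_].
- by rewrite mul1r.
- exact: expected_order_stat_ge0.
Qed.

End ExpectedWelfare.

Lemma sum_plurality_score n m (sigma : profile n m) : (0 < m)%N ->
  (\sum_(j < m) plurality_score sigma j)%N = n.
Proof.
move=> m0; rewrite /plurality_score.
under eq_bigr do rewrite -sum1_card big_mkcond /=.
rewrite exchange_big /= -[n in RHS]card_ord -sum1_card; apply: eq_bigr => i _.
rewrite (bigD1 ((sigma i)^-1 (Ordinal m0))%g) //= in_set_predE permKV eqxx big1 // => j ji.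
rewrite in_set_predE; case: eqP => // si0; case/negP: ji; apply/eqP.
by apply: (perm_inj (s := sigma i)); rewrite permKV; apply: val_inj.
Qed.

Lemma plurality_winner_score n m (sigma : profile n m) p : plurality_winner sigma p ->
  (n <= m * plurality_score sigma p)%N.
Proof.
move=> hp; rewrite -{1}(sum_plurality_score sigma (leq_ltn_trans (leq0n p) (ltn_ord p))).
by rewrite -[m in (_ <= m * _)%N]card_ord -sum_nat_const leq_sum.
Qed.

Lemma max_inv_mulr_le (R : realFieldType) (n m s : nat) : (n <= m * s)%N ->
  Num.max (m%:R^-1) (n%:R^-1) * n%:R <= s%:R :> R.
Proof.
move=> nms; have [->|n0] := posnP n; first by rewrite mulr0.
have [m0 s0] : (0 < m)%N /\ (0 < s)%N by apply/andP; rewrite -muln_gt0 (leq_trans n0).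
rewrite maxr_pMl // ge_max mulVf ?pnatr_eq0 -?lt0n // ler1n s0 andbT.
by rewrite mulrC ler_pdivrMr ?ltr0n // -natrM ler_nat mulnC.
Qed.

Theorem theorem13 (R : realType) (n m : nat) (D : probability R R)
    (hD : D `[0%R, 1%R] = 1%E)
    (sigma : profile n m) (p : 'I_m) (hp : plurality_winner sigma p) :
  forall j : 'I_m,
    Num.max (m%:R^-1) (n%:R^-1) * expected_sw D sigma j <= expected_sw D sigma p.
Proof.
move=> j; have m0 : (0 < m)%N := leq_ltn_trans (leq0n j) (ltn_ord j).
have max_ge0 : 0 <= Num.max (m%:R^-1) (n%:R^-1) :> R by rewrite le_max invr_ge0 ler0n.
apply: le_trans (ler_wpM2l max_ge0 (expected_sw_le_top hD sigma j)) _.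
apply: le_trans (expected_sw_ge_score hD sigma p); rewrite mulrA.
rewrite ler_wpM2r ?(expected_order_stat_ge0 hD m0) //.
exact/max_inv_mulr_le/plurality_winner_score.
Qed.
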